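(* Let $T=S+D$ as in the context. If $T$ is invertible in $\mathcal{L}(X)$, then at least one of the following two inequalities holds: \[ R_{S+D}^{+}:=\lim_{k\to\infty}\left[\sup_{i\in\mathbb{Z}}\left|\frac{\prod_{m=0}^{k-1}w_{i+m}}{\prod_{m=0}^{k}d_{i+m}}\right|\right]^{1/k}\le 1 \qquad\text{or}\qquad R_{S+D}^{-}:=\lim_{k\to\infty}\left[\sup_{i\in\mathbb{Z}}\left|\frac{\prod_{m=1}^{k-1}d_{i-m}}{\prod_{m=1}^{k}w_{i-m}}\right|\right]^{1/k}\le 1 . \]
   Context: $X$ is a separable complex Hilbert space with orthonormal basis $\{e_i\}_{i\in\mathbb{Z}}$. $S$ is the weighted shift $Se_i=w_ie_{i+1}$ ($i\in\mathbb{Z}$) with a bounded weight sequence $\{w_i\}_{i\in\mathbb{Z}}\subset\mathbb{C}$, and $D$ is the bounded diagonal operator $De_i=d_ie_i$ with bounded $\{d_i\}_{i\in\mathbb{Z}}\subset\mathbb{C}$; $T=S+D$. Empty products equal $1$ (e.g. $\prod_{m=1}^{0}d_{i-m}=1$). The limits defining $R^{\pm}_{S+D}$ are taken in $[0,+\infty]$ (assumed to exist), and a supremum is $+\infty$ if some denominator vanishes or the quotients are unbounded. *)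

From Stdlib Require Import Reals ZArith.
Open Scope R_scope.

Definition Cpx := (R * R)%type.
Definition C0 : Cpx := (0, 0).
Definition C1 : Cpx := (1, 0).
Definition Cadd (a b : Cpx) : Cpx := (fst a + fst b, snd a + snd b).
Definition Cmul (a b : Cpx) : Cpx :=
  (fst a * fst b - snd a * snd b, fst a * snd b + snd a * fst b).
Definition Cmod (a : Cpx) : R := sqrt (fst a ^ 2 + snd a ^ 2).

Fixpoint Cprod (f : nat -> Cpx) (n : nat) : Cpx :=
  match n with
  | O => C1
  | S n' => Cmul (Cprod f n') (f n')
  end.

(* X is identified with l^2(Z) via the orthonormal basis (e_i): e_i = delta_i. *)
Definition seqZ := Z -> Cpx.

Fixpoint psum (x : seqZ) (N : nat) : R :=
  match N with
  | O => Cmod (x 0%Z) ^ 2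
  | S N' => psum x N' + Cmod (x (Z.of_nat N)) ^ 2 + Cmod (x (- Z.of_nat N)%Z) ^ 2
  end.

Definition is_l2 (x : seqZ) : Prop := exists L, forall N, psum x N <= L.

(** the operator T = S + D on sequences:
    S e_i = w_i e_{i+1},  D e_i = d_i e_i,  so
    (T x)_j = w_{j-1} x_{j-1} + d_j x_j. *)
Definition Top (w d : Z -> Cpx) (x : seqZ) : seqZ :=
  fun j => Cadd (Cmul (w (j - 1)%Z) (x (j - 1)%Z)) (Cmul (d j) (x j)).

Definition bounded_seq (a : Z -> Cpx) : Prop := exists M, forall i, Cmod (a i) <= M.

(** T is invertible in L(X): there is a bounded linear operator B on l^2(Z)
    with B T = I and T B = I on l^2(Z). *)
Definition invertible_op (T : seqZ -> seqZ) : Prop :=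
  exists B : seqZ -> seqZ,
    (forall x, is_l2 x -> is_l2 (B x)) /\
    (forall x y, is_l2 x -> is_l2 y ->
        forall j, B (fun i => Cadd (x i) (y i)) j = Cadd (B x j) (B y j)) /\
    (forall (c : Cpx) x, is_l2 x ->
        forall j, B (fun i => Cmul c (x i)) j = Cmul c (B x j)) /\
    (exists M, 0 <= M /\ forall x L, (forall N, psum x N <= L) ->
        forall N, psum (B x) N <= M * L) /\
    (forall x, is_l2 x -> forall j, B (T x) j = x j) /\
    (forall x, is_l2 x -> forall j, T (B x) j = x j).

Inductive ER := Fin (r : R) | PInf.

Definition ER_le (a b : ER) : Prop :=
  match a, b with
  | _, PInf => True
  | PInf, Fin _ => False
  | Fin x, Fin y => x <= y
  end.

Definition is_ER_sup (f : Z -> ER) (s : ER) : Prop :=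
  (forall i, ER_le (f i) s) /\
  (forall u, (forall i, ER_le (f i) u) -> ER_le s u).

Definition ER_root (k : nat) (a : ER) : ER :=
  match a with
  | PInf => PInf
  | Fin x => Fin (if Rle_dec x 0 then 0 else Rpower x (/ INR k))
  end.

Definition ER_lim (u : nat -> ER) (l : ER) : Prop :=
  match l with
  | Fin r => forall eps, 0 < eps -> exists N, forall k, (N <= k)%nat ->
               exists x, u k = Fin x /\ Rabs (x - r) < eps
  | PInf => forall M, exists N, forall k, (N <= k)%nat -> ER_le (Fin M) (u k)
  end.

Definition ER_absquot (num den : Cpx) : ER :=
  if Req_EM_T (Cmod den) 0 then PInf else Fin (Cmod num / Cmod den).

Definition qplus (w d : Z -> Cpx) (k : nat) (i : Z) : ER :=
  ER_absquot (Cprod (fun m => w (i + Z.of_nat m)%Z) k)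
             (Cprod (fun m => d (i + Z.of_nat m)%Z) (S k)).

Definition qminus (w d : Z -> Cpx) (k : nat) (i : Z) : ER :=
  ER_absquot (Cprod (fun m => d (i - Z.of_nat (S m))%Z) (k - 1))
             (Cprod (fun m => w (i - Z.of_nat (S m))%Z) k).

Definition is_R_lim (q : nat -> Z -> ER) (Rl : ER) : Prop :=
  exists a : nat -> ER,
    (forall k, (1 <= k)%nat -> is_ER_sup (q k) (a k)) /\
    ER_lim (fun k => ER_root k (a k)) Rl.

(* Let v_i be the image of e_i under T^-1.  Since T v_i = e_i and T raises indices by at most
   one, the parts of v_i below and at-or-above i are mapped by T to multiples of e_i, hence are
   themselves multiples of v_i; so v_i lives either on [i, oo) or on (-oo, i).  Applying T^-1 to
   T e_i = d_i e_i + w_i e_(i+1) shows that the alternative does not depend on i.  In the first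
   case the equation T v_i = e_i solves recursively to
   |v_i(i+k)| = |w_i ... w_(i+k-1)| / |d_i ... d_(i+k)|, in the second to
   |v_i(i-k)| = |d_(i-1) ... d_(i-k+1)| / |w_(i-1) ... w_(i-k)|.  All coordinates of v_i are
   bounded by the norm of T^-1, so the corresponding quotients are uniformly bounded and their
   k-th roots cannot converge to anything above 1. *)
From Stdlib Require Import Reals ZArith Lra Lia Psatz Classical FunctionalExtensionality.
Open Scope R_scope.

Ltac cpx_ring := unfold Cadd, Cmul, C0, C1; simpl; f_equal; ring.

Lemma Cmod_ge0 a : 0 <= Cmod a.
Proof. apply sqrt_pos. Qed.

Lemma Cmod_mul a b : Cmod (Cmul a b) = Cmod a * Cmod b.
Proof.
  destruct a as [a1 a2], b as [b1 b2]; unfold Cmod, Cmul; simpl.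
  rewrite <- sqrt_mult by nra. f_equal; ring.
Qed.

Lemma Cmod_C0 : Cmod C0 = 0.
Proof. unfold Cmod, C0; simpl. replace (0 * (0 * 1) + 0 * (0 * 1)) with 0 by ring. apply sqrt_0. Qed.

Lemma Cmod_C1 : Cmod C1 = 1.
Proof. unfold Cmod, C1; simpl. replace (1 * (1 * 1) + 0 * (0 * 1)) with 1 by ring. apply sqrt_1. Qed.

Lemma Cmod_eq0 a : Cmod a = 0 -> a = C0.
Proof.
  destruct a as [a1 a2]; unfold Cmod, C0; simpl; intro H.
  apply sqrt_eq_0 in H; [|nra]. f_equal; nra.
Qed.

Lemma Cmul_C0_r a : Cmul a C0 = C0.
Proof. destruct a; cpx_ring. Qed.

Lemma Cmul_C1_l a : Cmul C1 a = a.
Proof. destruct a; cpx_ring. Qed.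

Lemma Cmul_C1_r a : Cmul a C1 = a.
Proof. destruct a; cpx_ring. Qed.

Lemma Cadd_C0_l a : Cadd C0 a = a.
Proof. destruct a; cpx_ring. Qed.

Lemma Cadd_C0_r a : Cadd a C0 = a.
Proof. destruct a; cpx_ring. Qed.

Lemma C1_neq_C0 : C1 <> C0.
Proof. unfold C1, C0; intro H; injection H; lra. Qed.

Lemma Cadd_C1_C1_neq_C1 : Cadd C1 C1 <> C1.
Proof. unfold C1, Cadd; simpl; intro H; injection H; lra. Qed.

Lemma Cmul_eq0_l a b : Cmul a b = C0 -> b <> C0 -> a = C0.
Proof.
  intros Hab Hb. apply Cmod_eq0.
  assert (Hm : Cmod a * Cmod b = 0) by (rewrite <- Cmod_mul, Hab; apply Cmod_C0).
  destruct (Rmult_integral _ _ Hm) as [Ha | Hb0]; [exact Ha |].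
  exfalso; apply Hb, Cmod_eq0, Hb0.
Qed.

Lemma Cmod_eq_of_Cadd_eq0 a b : Cadd a b = C0 -> Cmod a = Cmod b.
Proof.
  destruct a as [a1 a2], b as [b1 b2]; unfold Cadd, C0, Cmod; simpl; intro H.
  injection H as H1 H2. replace a1 with (- b1) by lra. replace a2 with (- b2) by lra.
  f_equal; ring.
Qed.

Lemma Cmod_mul_eq1 a b : Cmul a b = C1 -> Cmod a * Cmod b = 1.
Proof. intro H. rewrite <- Cmod_mul, H. apply Cmod_C1. Qed.

Lemma Cmod_Cprod_neq0 f n : (forall m, Cmod (f m) <> 0) -> Cmod (Cprod f n) <> 0.
Proof.
  intro Hf; induction n as [|n IH]; simpl.
  - rewrite Cmod_C1; lra.
  - rewrite Cmod_mul. now apply Rmult_integral_contrapositive_currified.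
Qed.

Lemma psum_ge0 x N : 0 <= psum x N.
Proof.
  induction N; cbn [psum]; [apply pow2_ge_0 |].
  pose proof (pow2_ge_0 (Cmod (x (Z.of_nat (S N))))).
  pose proof (pow2_ge_0 (Cmod (x (- Z.of_nat (S N))%Z))). lra.
Qed.

Lemma coord_le_psum x j : Cmod (x j) ^ 2 <= psum x (Z.abs_nat j).
Proof.
  pose proof (Nat2Z.inj_abs_nat j) as Hj.
  destruct (Z.abs_nat j) as [|n]; cbn [psum].
  - replace j with 0%Z by (simpl in Hj; lia). lra.
  - pose proof (psum_ge0 x n).
    pose proof (pow2_ge_0 (Cmod (x (Z.of_nat (S n))))).
    pose proof (pow2_ge_0 (Cmod (x (- Z.of_nat (S n))%Z))).
    destruct (Z.abs_spec j) as [[_ A] | [_ A]].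
    + replace j with (Z.of_nat (S n)) by lia. lra.
    + replace j with (- Z.of_nat (S n))%Z by lia. lra.
Qed.

Lemma coord_le_sqrt x L j : (forall N, psum x N <= L) -> Cmod (x j) <= sqrt L.
Proof.
  intro HL. rewrite <- (sqrt_pow2 (Cmod (x j))) by apply Cmod_ge0.
  apply sqrt_le_1_alt. eapply Rle_trans; [apply coord_le_psum | apply HL].
Qed.

Lemma psum_le_pointwise x y N :
  (forall j, Cmod (x j) <= Cmod (y j)) -> psum x N <= psum y N.
Proof.
  intro H.
  assert (Hsq : forall j, Cmod (x j) ^ 2 <= Cmod (y j) ^ 2).
  { intro j. pose proof (H j). pose proof (Cmod_ge0 (x j)). nra. }
  induction N; cbn [psum]; [apply Hsq |].
  pose proof (Hsq (Z.of_nat (S N))). pose proof (Hsq (- Z.of_nat (S N))%Z). lra.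
Qed.

Lemma psum_scale c x N : psum (fun j => Cmul c (x j)) N = Cmod c ^ 2 * psum x N.
Proof. induction N; cbn [psum]; [|rewrite IHN]; rewrite !Cmod_mul; ring. Qed.

Lemma is_l2_scale c x : is_l2 x -> is_l2 (fun j => Cmul c (x j)).
Proof.
  intros [L HL]. exists (Cmod c ^ 2 * L). intro N. rewrite psum_scale.
  apply Rmult_le_compat_l; [apply pow2_ge_0 | apply HL].
Qed.

Definition delta (i : Z) : seqZ := fun j => if Z.eq_dec j i then C1 else C0.

Lemma delta_same i : delta i i = C1.
Proof. unfold delta. now destruct (Z.eq_dec i i). Qed.

Lemma delta_other i j : j <> i -> delta i j = C0.
Proof. unfold delta. now destruct (Z.eq_dec j i). Qed.

Lemma psum_delta i N : psum (delta i) N = if (Z.abs i <=? Z.of_nat N)%Z then 1 else 0.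
Proof.
  unfold delta; induction N as [|N IH]; cbn [psum].
  - destruct (Z.eq_dec 0 i), (Z.leb_spec (Z.abs i) (Z.of_nat 0)); simpl in *; try lia;
      rewrite ?Cmod_C1, ?Cmod_C0; lra.
  - rewrite IH.
    destruct (Z.eq_dec (Z.of_nat (S N)) i), (Z.eq_dec (- Z.of_nat (S N)) i),
      (Z.leb_spec (Z.abs i) (Z.of_nat N)), (Z.leb_spec (Z.abs i) (Z.of_nat (S N)));
      try lia; rewrite ?Cmod_C1, ?Cmod_C0; lra.
Qed.

Lemma psum_delta_le1 i N : psum (delta i) N <= 1.
Proof. rewrite psum_delta. destruct (Z.abs i <=? Z.of_nat N)%Z; lra. Qed.

Lemma is_l2_delta i : is_l2 (delta i).
Proof. exists 1. apply psum_delta_le1. Qed.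

Definition trunc_lt (i : Z) (x : seqZ) : seqZ := fun j => if Z_lt_dec j i then x j else C0.
Definition trunc_ge (i : Z) (x : seqZ) : seqZ := fun j => if Z_lt_dec j i then C0 else x j.

Lemma is_l2_trunc_lt i x : is_l2 x -> is_l2 (trunc_lt i x).
Proof.
  intros [L HL]. exists L. intro N. eapply Rle_trans; [| apply (HL N)].
  apply psum_le_pointwise. intro j. unfold trunc_lt.
  destruct (Z_lt_dec j i); [lra | rewrite Cmod_C0; apply Cmod_ge0].
Qed.

Lemma is_l2_trunc_ge i x : is_l2 x -> is_l2 (trunc_ge i x).
Proof.
  intros [L HL]. exists L. intro N. eapply Rle_trans; [| apply (HL N)].
  apply psum_le_pointwise. intro j. unfold trunc_ge.
  destruct (Z_lt_dec j i); [rewrite Cmod_C0; apply Cmod_ge0 | lra].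
Qed.

Lemma ER_absquot_le num den x C :
  Cmod den <> 0 -> Cmod den * x = Cmod num -> x <= C -> ER_le (ER_absquot num den) (Fin C).
Proof.
  intros Hden Hx HC. unfold ER_absquot.
  destruct (Req_EM_T (Cmod den) 0) as [E | _]; [contradiction |]. simpl.
  rewrite <- Hx. now replace (Cmod den * x / Cmod den) with x by (field; exact Hden).
Qed.

Section ShiftPlusDiagonal.

Variables w d : Z -> Cpx.

Lemma Top_delta i :
  Top w d (delta i) = fun j => Cadd (Cmul (d i) (delta i j)) (Cmul (w i) (delta (i + 1) j)).
Proof.
  extensionality j. unfold Top, delta.
  destruct (Z.eq_dec (j - 1) i), (Z.eq_dec j i), (Z.eq_dec j (i + 1)); try lia;
    [subst i | subst j |]; cpx_ring.
Qed.

Variables (i : Z) (v : seqZ).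
Hypothesis Tv : forall j, Top w d v j = delta i j.

(* T moves indices up by at most one, so below [i] the image of [trunc_lt i v] agrees with
   [T v = delta i], and above [i] it vanishes. *)
Lemma Top_trunc_lt :
  Top w d (trunc_lt i v) = fun j => Cmul (Cmul (w (i - 1)%Z) (v (i - 1)%Z)) (delta i j).
Proof.
  extensionality j. pose proof (Tv j) as T. unfold Top, trunc_lt, delta in *.
  destruct (Z_lt_dec (j - 1) i), (Z_lt_dec j i), (Z.eq_dec j i); try lia.
  - rewrite Cmul_C0_r. exact T.
  - subst j. now rewrite Cmul_C0_r, Cadd_C0_r, Cmul_C1_r.
  - now rewrite !Cmul_C0_r, Cadd_C0_l.
Qed.

Lemma Top_trunc_ge :
  Top w d (trunc_ge i v) = fun j => Cmul (Cmul (d i) (v i)) (delta i j).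
Proof.
  extensionality j. pose proof (Tv j) as T. unfold Top, trunc_ge, delta in *.
  destruct (Z_lt_dec (j - 1) i), (Z_lt_dec j i), (Z.eq_dec j i); try lia.
  - now rewrite !Cmul_C0_r, Cadd_C0_l.
  - subst j. now rewrite Cmul_C0_r, Cadd_C0_l, Cmul_C1_r.
  - rewrite Cmul_C0_r. exact T.
Qed.

End ShiftPlusDiagonal.

Section InverseColumns.

Variables (w d : Z -> Cpx) (B : seqZ -> seqZ).

Hypothesis B_l2 : forall x, is_l2 x -> is_l2 (B x).
Hypothesis B_add : forall x y, is_l2 x -> is_l2 y ->
  forall j, B (fun i => Cadd (x i) (y i)) j = Cadd (B x j) (B y j).
Hypothesis B_scale : forall (c : Cpx) x, is_l2 x ->
  forall j, B (fun i => Cmul c (x i)) j = Cmul c (B x j).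
Hypothesis B_Top : forall x, is_l2 x -> forall j, B (Top w d x) j = x j.
Hypothesis Top_B : forall x, is_l2 x -> forall j, Top w d (B x) j = x j.

Definition col_supp_ge (i : Z) : Prop := forall j, (j < i)%Z -> B (delta i) j = C0.
Definition col_supp_lt (i : Z) : Prop := forall j, (i <= j)%Z -> B (delta i) j = C0.

Lemma col_coord_eq i j :
  Cadd (Cmul (w (j - 1)%Z) (B (delta i) (j - 1)%Z)) (Cmul (d j) (B (delta i) j)) = delta i j.
Proof. exact (Top_B _ (is_l2_delta i) j). Qed.

Lemma trunc_lt_col i j :
  trunc_lt i (B (delta i)) j
  = Cmul (Cmul (w (i - 1)%Z) (B (delta i) (i - 1)%Z)) (B (delta i) j).
Proof.
  rewrite <- (B_Top _ (is_l2_trunc_lt i _ (B_l2 _ (is_l2_delta i))) j).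
  rewrite (Top_trunc_lt w d i _ (col_coord_eq i)). apply B_scale, is_l2_delta.
Qed.

Lemma trunc_ge_col i j :
  trunc_ge i (B (delta i)) j = Cmul (Cmul (d i) (B (delta i) i)) (B (delta i) j).
Proof.
  rewrite <- (B_Top _ (is_l2_trunc_ge i _ (B_l2 _ (is_l2_delta i))) j).
  rewrite (Top_trunc_ge w d i _ (col_coord_eq i)). apply B_scale, is_l2_delta.
Qed.

(* The two truncations are multiples [a v] and [b v] of [v = B (delta i)] with [a + b = 1];
   a nonzero coordinate below [i] forces [b = 0], hence [a = 1], hence [v = trunc_lt i v]. *)
Lemma col_supp_dichotomy i : col_supp_ge i \/ col_supp_lt i.
Proof.
  destruct (classic (col_supp_ge i)) as [Hge | Hge]; [now left | right].
  apply not_all_ex_not in Hge as [j Hj].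
  apply imply_to_and in Hj as [Hji Hvj].
  set (a := Cmul (w (i - 1)%Z) (B (delta i) (i - 1)%Z)).
  set (b := Cmul (d i) (B (delta i) i)).
  assert (Hb : b = C0).
  { apply (Cmul_eq0_l b (B (delta i) j)); [| exact Hvj].
    unfold b; rewrite <- trunc_ge_col. unfold trunc_ge. now destruct (Z_lt_dec j i); [| lia]. }
  assert (Ha : a = C1).
  { pose proof (col_coord_eq i i) as E. rewrite delta_same in E. fold a b in E. now rewrite Hb, Cadd_C0_r in E. }
  intros k Hk. rewrite <- (Cmul_C1_l (B (delta i) k)), <- Ha.
  unfold a; rewrite <- trunc_lt_col. unfold trunc_lt. now destruct (Z_lt_dec k i); [lia |].
Qed.

Lemma col_supp_ge_diag i : col_supp_ge i -> Cmul (d i) (B (delta i) i) = C1.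
Proof.
  intro H. pose proof (col_coord_eq i i) as E.
  now rewrite delta_same, (H (i - 1)%Z), Cmul_C0_r, Cadd_C0_l in E by lia.
Qed.

Lemma col_supp_lt_diag i : col_supp_lt i -> Cmul (w (i - 1)%Z) (B (delta i) (i - 1)%Z) = C1.
Proof.
  intro H. pose proof (col_coord_eq i i) as E.
  now rewrite delta_same, (H i), Cmul_C0_r, Cadd_C0_r in E by lia.
Qed.

Lemma delta_col_comb i j :
  delta i j = Cadd (Cmul (d i) (B (delta i) j)) (Cmul (w i) (B (delta (i + 1)) j)).
Proof.
  rewrite <- (B_Top _ (is_l2_delta i) j), Top_delta.
  rewrite (B_add _ _ (is_l2_scale _ _ (is_l2_delta _)) (is_l2_scale _ _ (is_l2_delta _)) j).
  now rewrite !B_scale by apply is_l2_delta.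
Qed.

Lemma col_supp_ge_succ i : col_supp_ge i <-> col_supp_ge (i + 1).
Proof.
  pose proof (delta_col_comb i i) as E. rewrite delta_same in E.
  split; intro H.
  - destruct (col_supp_dichotomy (i + 1)) as [H1 | H1]; [exact H1 | exfalso].
    pose proof (col_supp_lt_diag _ H1) as Hw. replace (i + 1 - 1)%Z with i in Hw by lia.
    rewrite Hw, (col_supp_ge_diag i H) in E. now apply Cadd_C1_C1_neq_C1.
  - destruct (col_supp_dichotomy i) as [H1 | H1]; [exact H1 | exfalso].
    rewrite (H i), (H1 i), !Cmul_C0_r, Cadd_C0_l in E by lia. now apply C1_neq_C0.
Qed.

Lemma col_supp_ge_iff0 i : col_supp_ge i <-> col_supp_ge 0.
Proof.
  induction i as [| i IH | i IH] using Z.peano_ind.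
  - tauto.
  - rewrite <- Z.add_1_r, <- col_supp_ge_succ. exact IH.
  - rewrite <- IH, col_supp_ge_succ. now replace (Z.pred i + 1)%Z with i by lia.
Qed.

Lemma col_supp_uniform : (forall i, col_supp_ge i) \/ (forall i, col_supp_lt i).
Proof.
  destruct (classic (col_supp_ge 0)) as [H0 | H0].
  - left. intro i. now apply col_supp_ge_iff0.
  - right. intro i. destruct (col_supp_dichotomy i) as [Hi | Hi]; [| exact Hi].
    exfalso. now apply H0, col_supp_ge_iff0 with i.
Qed.

Lemma col_mod_step i j :
  j <> i -> Cmod (w (j - 1)%Z) * Cmod (B (delta i) (j - 1)%Z) = Cmod (d j) * Cmod (B (delta i) j).
Proof.
  intro Hji. rewrite <- !Cmod_mul. apply Cmod_eq_of_Cadd_eq0.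
  rewrite col_coord_eq. now apply delta_other.
Qed.

Section UpperColumns.

Hypothesis Hge : forall i, col_supp_ge i.

Lemma d_mod_neq0 j : Cmod (d j) <> 0.
Proof.
  intro E. pose proof (Cmod_mul_eq1 _ _ (col_supp_ge_diag j (Hge j))) as H.
  rewrite E in H. lra.
Qed.

Lemma col_mod_above i k :
  Cmod (Cprod (fun m => d (i + Z.of_nat m)%Z) (S k)) * Cmod (B (delta i) (i + Z.of_nat k)%Z)
  = Cmod (Cprod (fun m => w (i + Z.of_nat m)%Z) k).
Proof.
  induction k as [| k IH]; cbn [Cprod] in *.
  - replace (i + Z.of_nat 0)%Z with i by lia.
    rewrite Cmul_C1_l, Cmod_C1, <- Cmod_mul, col_supp_ge_diag by apply Hge. apply Cmod_C1.
  - rewrite !Cmod_mul in *. rewrite <- IH.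
    pose proof (col_mod_step i (i + Z.of_nat (S k))%Z ltac:(lia)) as Hstep.
    replace (i + Z.of_nat (S k) - 1)%Z with (i + Z.of_nat k)%Z in Hstep by lia.
    rewrite Rmult_assoc, <- Hstep. ring.
Qed.

Lemma qplus_le C (HC : forall i j, Cmod (B (delta i) j) <= C) k i : ER_le (qplus w d k i) (Fin C).
Proof.
  apply ER_absquot_le with (x := Cmod (B (delta i) (i + Z.of_nat k)%Z)).
  - apply Cmod_Cprod_neq0. intro m. apply d_mod_neq0.
  - apply col_mod_above.
  - apply HC.
Qed.

End UpperColumns.

Section LowerColumns.

Hypothesis Hlt : forall i, col_supp_lt i.

Lemma w_mod_neq0 j : Cmod (w j) <> 0.
Proof.
  intro E. pose proof (Cmod_mul_eq1 _ _ (col_supp_lt_diag (j + 1) (Hlt (j + 1)))) as H.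
  replace (j + 1 - 1)%Z with j in H by lia. rewrite E in H. lra.
Qed.

Lemma col_mod_below i n :
  Cmod (Cprod (fun m => w (i - Z.of_nat (S m))%Z) (S n)) * Cmod (B (delta i) (i - Z.of_nat (S n))%Z)
  = Cmod (Cprod (fun m => d (i - Z.of_nat (S m))%Z) n).
Proof.
  induction n as [| n IH]; cbn [Cprod] in *.
  - replace (i - Z.of_nat 1)%Z with (i - 1)%Z by lia.
    rewrite Cmul_C1_l, Cmod_C1, <- Cmod_mul, col_supp_lt_diag by apply Hlt. apply Cmod_C1.
  - rewrite !Cmod_mul in *. rewrite <- IH.
    pose proof (col_mod_step i (i - Z.of_nat (S n))%Z ltac:(lia)) as Hstep.
    replace (i - Z.of_nat (S n) - 1)%Z with (i - Z.of_nat (S (S n)))%Z in Hstep by lia.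
    rewrite Rmult_assoc, Hstep. ring.
Qed.

Lemma qminus_le C (HC : forall i j, Cmod (B (delta i) j) <= C) k i :
  (1 <= k)%nat -> ER_le (qminus w d k i) (Fin C).
Proof.
  intro Hk. destruct k as [| n]; [lia |]. unfold qminus.
  replace (S n - 1)%nat with n by lia.
  apply ER_absquot_le with (x := Cmod (B (delta i) (i - Z.of_nat (S n))%Z)).
  - apply Cmod_Cprod_neq0. intro m. apply w_mod_neq0.
  - apply col_mod_below.
  - apply HC.
Qed.

End LowerColumns.

End InverseColumns.

Lemma ln_le x y : 0 < x -> x <= y -> ln x <= ln y.
Proof.
  intros Hx Hxy. destruct (Rle_lt_or_eq_dec x y Hxy) as [H | ->]; [| lra].
  left. now apply ln_increasing.
Qed.

Lemma ER_root_Fin_le k z C : (1 <= k)%nat -> z <= C ->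
  exists y, ER_root k (Fin z) = Fin y /\ (1 < y -> INR k * ln y <= ln C).
Proof.
  intros Hk HzC. unfold ER_root. destruct (Rle_dec z 0) as [Hz | Hz].
  - exists 0. split; [reflexivity | lra].
  - eexists; split; [reflexivity |]. intros _.
    assert (Hk0 : 0 < INR k) by (apply lt_0_INR; lia).
    unfold Rpower. rewrite ln_exp.
    replace (INR k * (/ INR k * ln z)) with (ln z) by (field; lra).
    apply ln_le; lra.
Qed.

(* [k ln y <= ln C] forbids [y >= r > 1] as soon as [k ln r > ln C]. *)
Lemma roots_frequently_below (u : nat -> ER) C r : 1 < r ->
  (forall k, (1 <= k)%nat -> exists y, u k = Fin y /\ (1 < y -> INR k * ln y <= ln C)) ->
  forall N, exists k y, (N <= k)%nat /\ u k = Fin y /\ y < r.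
Proof.
  intros Hr Hu N.
  assert (Hlnr : 0 < ln r) by (rewrite <- ln_1; apply ln_increasing; lra).
  destruct (INR_archimed (ln r) (ln C) Hlnr) as [n Hn].
  destruct (Hu (N + n + 1)%nat ltac:(lia)) as [y [Hy Hbound]].
  exists (N + n + 1)%nat, y. split; [lia |]. split; [exact Hy |].
  destruct (Rlt_le_dec y r) as [| Hry]; [assumption | exfalso].
  assert (ln r <= ln y) by (apply ln_le; lra).
  assert (INR n * ln r <= INR (N + n + 1) * ln y).
  { apply Rmult_le_compat; [apply pos_INR | lra | apply le_INR; lia | assumption]. }
  specialize (Hbound ltac:(lra)). lra.
Qed.

Lemma is_R_lim_le1 q Rl C :
  (forall k i, (1 <= k)%nat -> ER_le (q k i) (Fin C)) -> is_R_lim q Rl -> ER_le Rl (Fin 1).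
Proof.
  intros Hq [a [Hsup Hlim]].
  assert (Hroots : forall k, (1 <= k)%nat ->
    exists y, ER_root k (a k) = Fin y /\ (1 < y -> INR k * ln y <= ln C)).
  { intros k Hk. destruct (Hsup k Hk) as [_ Hleast].
    specialize (Hleast (Fin C) (fun i => Hq k i Hk)).
    destruct (a k) as [z |]; [now apply ER_root_Fin_le | contradiction]. }
  destruct Rl as [r |]; simpl.
  - destruct (Rle_dec r 1) as [| Hr]; [assumption | exfalso].
    destruct (Hlim ((r - 1) / 2) ltac:(lra)) as [N HN].
    destruct (roots_frequently_below _ C ((r + 1) / 2) ltac:(lra) Hroots N)
      as [k [y [Hk [Hy Hyr]]]].
    destruct (HN k Hk) as [x [Hx Hxr]]. rewrite Hy in Hx. injection Hx as <-.
    apply Rabs_def2 in Hxr. lra.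
  - destruct (Hlim 2) as [N HN].
    destruct (roots_frequently_below _ C 2 ltac:(lra) Hroots N) as [k [y [Hk [Hy Hy2]]]].
    specialize (HN k Hk). rewrite Hy in HN. simpl in HN. lra.
Qed.

Theorem mainTheorem1 (w d : Z -> Cpx) (Rplus Rminus : ER) :
  bounded_seq w -> bounded_seq d ->
  is_R_lim (qplus w d) Rplus ->
  is_R_lim (qminus w d) Rminus ->
  invertible_op (Top w d) ->
  ER_le Rplus (Fin 1) \/ ER_le Rminus (Fin 1).
Proof.
  intros _ _ Hplus Hminus [B [Hl2 [Hadd [Hscale [[M [_ Hbd]] [HBT HTB]]]]]].
  assert (Hcol : forall i j, Cmod (B (delta i) j) <= sqrt M).
  { intros i j. apply coord_le_sqrt. intro N. rewrite <- (Rmult_1_r M).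
    apply Hbd, psum_delta_le1. }
  destruct (col_supp_uniform w d B Hl2 Hadd Hscale HBT HTB) as [Hge | Hlt]; [left | right].
  - apply (is_R_lim_le1 (qplus w d) Rplus (sqrt M)); [| exact Hplus].
    intros k i _. exact (qplus_le w d B HTB Hge _ Hcol k i).
  - apply (is_R_lim_le1 (qminus w d) Rminus (sqrt M)); [| exact Hminus].
    exact (qminus_le w d B HTB Hlt _ Hcol).
Qed.
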